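(* Let $\{\boldsymbol y^{TSLP}_n\}_{n\in\mathcal T}$, $\{u^{TSLP}_n\}_{n\in\mathcal T\setminus\{1\}}$ be the values of the $\boldsymbol y$- and $u$-variables in an optimal solution of the linear programming relaxation of the two-stage model (integrality of $\boldsymbol x$ dropped). Define $\boldsymbol x^{MS}_1=\lceil\boldsymbol B_{t_1}\boldsymbol y^{TSLP}_1\rceil$, $\boldsymbol x^{MS}_n=\max_{m\in\mathcal P(n)}\lceil\boldsymbol B_{t_m}\boldsymbol y^{TSLP}_m\rceil-\max_{m\in\mathcal P(a(n))}\lceil\boldsymbol B_{t_m}\boldsymbol y^{TSLP}_m\rceil$ ($n\ne1$), $\eta^{MS}_n=\max_{m\in\mathcal C(n)}\{\boldsymbol f_{t_m}^{\mathsf T}\sum_{l\in\mathcal P(m)}\boldsymbol x^{MS}_l+\boldsymbol c_{t_m}^{\mathsf T}\boldsymbol y^{TSLP}_m-u^{TSLP}_m\}$ ($n\notin\mathcal L$), $\boldsymbol x^{TS}_1=\boldsymbol B_{t_1}\boldsymbol y^{TSLP}_1$, $\boldsymbol x^{TS}_n=\max_{m\in\mathcal P(n)}\max_{l\in\mathcal T_{t_m}}\boldsymbol B_{t_l}\boldsymbol y^{TSLP}_l-\max_{m\in\mathcal P(a(n))}\max_{l\in\mathcal T_{t_m}}\boldsymbol B_{t_l}\boldsymbol y^{TSLP}_l$ ($n\ne1$), $\eta^{TS}_n=\max_{m\in\mathcal C(n)}\{\boldsymbol f_{t_m}^{\mathsf T}\sum_{l\in\mathcal P(m)}\boldsymbol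 x^{TS}_l+\boldsymbol c_{t_m}^{\mathsf T}\boldsymbol y^{TSLP}_m-u^{TSLP}_m\}$ ($n\notin\mathcal L$). Then $$\mathrm{VMS}_R\ge\mathrm{VMS}_R^{LB1}:=\boldsymbol f_{t_1}^{\mathsf T}\big(\boldsymbol B_{t_1}\boldsymbol y^{TSLP}_1-\lceil\boldsymbol B_{t_1}\boldsymbol y^{TSLP}_1\rceil\big)+\sum_{n\in\mathcal T\setminus\{1\}}p_n(1-\lambda_{t_n})\boldsymbol f_{t_n}^{\mathsf T}\Big(\max_{m\in\mathcal P(n)}\max_{l\in\mathcal T_{t_m}}\boldsymbol B_{t_l}\boldsymbol y^{TSLP}_l-\max_{m\in\mathcal P(n)}\lceil\boldsymbol B_{t_m}\boldsymbol y^{TSLP}_m\rceil\Big)+\sum_{n\in\mathcal T\setminus\mathcal L}p_n\lambda_{t_n+1}\big(\eta^{TS}_n-\eta^{MS}_n\big).$$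
   Context: Setting. Fix integers $T\ge 2$ (periods), $M\ge1$ (facilities), $N\ge1$ (customer sites). For each period $t$: maintenance costs $f_{ti}\ge 0$ forming $\boldsymbol f_t\in\mathbb R^M$; operational costs $c_{tij}\ge0$ forming $\boldsymbol c_t\in\mathbb R^{MN}$; capacities $h_{ti}>0$. Vectors $\boldsymbol y\in\mathbb R^{MN}$ are indexed by pairs $(i,j)$; $(\boldsymbol A_t\boldsymbol y)_j=\sum_{i=1}^M y_{ij}$ defines $\boldsymbol A_t$ and $(\boldsymbol B_t\boldsymbol y)_i=\frac1{h_{ti}}\sum_{j=1}^N y_{ij}$ defines $\boldsymbol B_t$. Ceilings and maxima of vectors are componentwise. Scenario tree: a finite rooted tree with node set $\mathcal T$, root $1$, all root-to-leaf paths having $T$ nodes; $\mathcal T_t$ nodes at depth $t$, $t_n$ the period of $n$, $\mathcal L=\mathcal T_T$ the leaves, $a(n)$ the parent of $n\ne1$, $\mathcal C(n)$ the children of $n$, $\mathcal P(n)$ the nodes on the root-to-$n$ path (inclusive). Probabilities $p_n>0$ with $\sum_{n\in\mathcal T_t}p_n=1$ and $\sum_{m\in\mathcal C(n)}p_m=p_n$ ($n\notin\mathcal L$); demands $\boldsymbol d_n\in\mathbb R^N_{\ge0}$. Risk parameters $\lambda_t\in[0,1]$, $\alpha_t\in(0,1)$, $t=2,\ldots,T$. $\tilde{\boldsymbol f}_n=\boldsymbol f_{t_n}$ if $n=1$, else $(1-\lambda_{t_n})\boldsymbol f_{t_n}$; $\tilde{\boldsymbol c}_n=\boldsymbol c_{t_n}$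 if $n=1$, else $(1-\lambda_{t_n})\boldsymbol c_{t_n}$; $\tilde\lambda_n=0$ if $n\in\mathcal L$, else $\lambda_{t_n+1}$; $\tilde\alpha_n=0$ if $n=1$, else $\lambda_{t_n}/(1-\alpha_{t_n})$. Multistage model: $z^{MS}_R=\min\sum_{n\in\mathcal T}p_n\big(\tilde{\boldsymbol f}_n^{\mathsf T}\sum_{m\in\mathcal P(n)}\boldsymbol x_m+\tilde{\boldsymbol c}_n^{\mathsf T}\boldsymbol y_n+\tilde\lambda_n\eta_n+\tilde\alpha_nu_n\big)$ over $\boldsymbol x_n\in\mathbb Z^M_+$, $\boldsymbol y_n\in\mathbb R^{MN}_+$ ($n\in\mathcal T$), $\eta_n\in\mathbb R$ ($n\notin\mathcal L$), $u_n\ge0$ ($n\ne1$), subject to $\boldsymbol A_{t_n}\boldsymbol y_n=\boldsymbol d_n$, $\boldsymbol B_{t_n}\boldsymbol y_n\le\sum_{m\in\mathcal P(n)}\boldsymbol x_m$ ($n\in\mathcal T$) and $u_n+\eta_{a(n)}\ge\boldsymbol f_{t_n}^{\mathsf T}\sum_{m\in\mathcal P(n)}\boldsymbol x_m+\boldsymbol c_{t_n}^{\mathsf T}\boldsymbol y_n$ ($n\ne1$). Two-stage model: the multistage model plus the constraints $\boldsymbol x_m=\boldsymbol x_n$ for all $m,n\in\mathcal T_t$, $t=1,\ldots,T$; optimal value $z^{TS}_R$. $\mathrm{VMS}_R:=z^{TS}_R-z^{MS}_R$. *)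

From HB Require Import structures.
From mathcomp Require Import all_boot all_order all_algebra.
Set Implicit Arguments. Unset Strict Implicit. Unset Printing Implicit Defensive.
Import Order.TTheory GRing.Theory Num.Theory.
Local Open Scope ring_scope.

(* Maximum of F over a finite set S (meaningful for S nonempty; 0 if S = set0). *)
Definition fmax (R : realDomainType) (T : finType) (S : {set T}) (F : T -> R) : R :=
  match [pick m in S] with
  | Some m0 => \big[Num.max/F m0]_(m in S) F m
  | None => 0
  end.

Definition ceilR (R : archiRealFieldType) (x : R) : R := (Num.ceil x)%:~R.

Section Model.
Variable R : archiRealFieldType.
Variables (T M N : nat).
Variable Node : finType.
Variable root : Node.
Variable par : Node -> Node.      (* a(n), parent (only used for n <> root) *)
Variable dep : Node -> nat.       (* t_n, period / depth of node n (root has 1) *)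
Variable p : Node -> R.
Variable d : Node -> 'I_N -> R.
Variable f : nat -> 'I_M -> R.
Variable c : nat -> 'I_M -> 'I_N -> R.
Variable h : nat -> 'I_M -> R.
Variables lam alpha : nat -> R.

Definition scenario_tree : Prop :=
  dep root = 1%N /\
  (forall n, n != root -> dep n = (dep (par n)).+1) /\
  (forall n, (dep n <= T)%N) /\
  (forall n, (dep n < T)%N -> exists m, m != root /\ par m = n) /\
  (forall n, 0 < p n) /\
  (forall k, (1 <= k <= T)%N -> \sum_(n | dep n == k) p n = 1) /\
  (forall n, (dep n < T)%N -> \sum_(m | (m != root) && (par m == n)) p m = p n).

(* m \in P(n): m lies on the root-to-n path (inclusive) *)
Definition inP (m n : Node) : bool :=
  (dep m <= dep n)%N && (iter (dep n - dep m) par n == m).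
Definition Pset (n : Node) : {set Node} := [set m | inP m n].
Definition children (n : Node) : {set Node} := [set m | (m != root) && (par m == n)].
Definition level (k : nat) : {set Node} := [set l | dep l == k].
Definition isleaf (n : Node) : bool := dep n == T.

Definition cum (x : Node -> 'I_M -> R) (n : Node) (i : 'I_M) : R :=
  \sum_(m | inP m n) x m i.
Definition Av (y : 'I_M -> 'I_N -> R) (j : 'I_N) : R := \sum_(i < M) y i j.
Definition Bv (k : nat) (y : 'I_M -> 'I_N -> R) (i : 'I_M) : R :=
  (h k i)^-1 * \sum_(j < N) y i j.
Definition fdot (k : nat) (v : 'I_M -> R) : R := \sum_(i < M) f k i * v i.
Definition cdot (k : nat) (y : 'I_M -> 'I_N -> R) : R :=
  \sum_(i < M) \sum_(j < N) c k i j * y i j.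

Definition ftil (n : Node) (i : 'I_M) : R :=
  if n == root then f (dep n) i else (1 - lam (dep n)) * f (dep n) i.
Definition ctil (n : Node) (i : 'I_M) (j : 'I_N) : R :=
  if n == root then c (dep n) i j else (1 - lam (dep n)) * c (dep n) i j.
Definition lamtil (n : Node) : R := if isleaf n then 0 else lam (dep n).+1.
Definition alphatil (n : Node) : R :=
  if n == root then 0 else lam (dep n) / (1 - alpha (dep n)).

Definition objective (x : Node -> 'I_M -> R) (y : Node -> 'I_M -> 'I_N -> R)
    (eta u : Node -> R) : R :=
  \sum_(n : Node) p n * (\sum_(i < M) ftil n i * cum x n i
      + \sum_(i < M) \sum_(j < N) ctil n i j * y n i j
      + lamtil n * eta n + alphatil n * u n).

Definition common_cons (x : Node -> 'I_M -> R) (y : Node -> 'I_M -> 'I_N -> R)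
    (eta u : Node -> R) : Prop :=
  [/\ (forall n i j, 0 <= y n i j),
      (forall n, n != root -> 0 <= u n),
      (forall n j, Av (y n) j = d n j),
      (forall n i, Bv (dep n) (y n) i <= cum x n i) &
      (forall n, n != root ->
         u n + eta (par n) >= fdot (dep n) (cum x n) + cdot (dep n) (y n))].

Definition nonanticipative (x : Node -> 'I_M -> R) : Prop :=
  forall m n, dep m = dep n -> forall i, x m i = x n i.

Definition feas_MS x y eta u : Prop :=
  common_cons x y eta u /\ (forall n i, x n i \is a Num.int /\ 0 <= x n i).
Definition feas_TS x y eta u : Prop :=
  feas_MS x y eta u /\ nonanticipative x.
Definition feas_TSLP x y eta u : Prop :=
  [/\ common_cons x y eta u, (forall n i, 0 <= x n i) & nonanticipative x].

Definition opt_value (feas : (Node -> 'I_M -> R) -> (Node -> 'I_M -> 'I_N -> R) ->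
    (Node -> R) -> (Node -> R) -> Prop) (z : R) : Prop :=
  (forall x y eta u, feas x y eta u -> z <= objective x y eta u) /\
  (forall e, 0 < e -> exists x y eta u, feas x y eta u /\ objective x y eta u < z + e).

Section Heuristic.
Variables (yL : Node -> 'I_M -> 'I_N -> R) (uL : Node -> R).

Definition MC (n : Node) (i : 'I_M) : R :=
  fmax (Pset n) (fun m => ceilR (Bv (dep m) (yL m) i)).
Definition MT (n : Node) (i : 'I_M) : R :=
  fmax (Pset n) (fun m => fmax (level (dep m)) (fun l => Bv (dep l) (yL l) i)).

Definition xMS (n : Node) (i : 'I_M) : R :=
  if n == root then ceilR (Bv (dep root) (yL root) i) else MC n i - MC (par n) i.
Definition xTS (n : Node) (i : 'I_M) : R :=
  if n == root then Bv (dep root) (yL root) i else MT n i - MT (par n) i.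

Definition etaMS (n : Node) : R :=
  fmax (children n) (fun m => fdot (dep m) (cum xMS m) + cdot (dep m) (yL m) - uL m).
Definition etaTS (n : Node) : R :=
  fmax (children n) (fun m => fdot (dep m) (cum xTS m) + cdot (dep m) (yL m) - uL m).

Definition VMS_LB1 : R :=
  fdot (dep root) (fun i => Bv (dep root) (yL root) i - ceilR (Bv (dep root) (yL root) i))
  + \sum_(n | n != root) p n * (1 - lam (dep n)) * fdot (dep n) (fun i => MT n i - MC n i)
  + \sum_(n | ~~ isleaf n) p n * lam (dep n).+1 * (etaTS n - etaMS n).
End Heuristic.
End Model.

(* The LP relaxation of the two-stage model bounds z^TS from below, and rounding
   its capacities up along each scenario path (x^MS, eta^MS) gives a feasible
   multistage solution, so z^MS is at most the objective of that solution.
   Nonanticipativity forces the cumulative capacity of the LP solution at a node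
   to cover B_t y_l for every node l of its own and of all earlier levels, so the
   LP solution dominates (x^TS, eta^TS) and its objective is the larger.  Finally,
   the cumulative capacities of x^MS and x^TS telescope to the path maxima, which
   makes the difference of the two heuristic objectives exactly VMS^LB1. *)

From Pilot Require Import Defs.
From HB Require Import structures.
From mathcomp Require Import all_boot all_order all_algebra.
From mathcomp Require Import zify ring lra.
Set Implicit Arguments. Unset Strict Implicit. Unset Printing Implicit Defensive.
Import Order.TTheory GRing.Theory Num.Theory.
Local Open Scope ring_scope.

Section Fmax.
Variables (R : realDomainType) (I : finType).
Implicit Types (S A B : {set I}) (F : I -> R).

Lemma le_fmax S F m : m \in S -> F m <= fmax S F.
Proof.
rewrite /fmax; case: pickP => [m0 _|S0] mS; last by rewrite S0 in mS.
exact: le_bigmax_cond.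
Qed.

Lemma fmax_le S F b m :
  m \in S -> {in S, forall k, F k <= b} -> fmax S F <= b.
Proof.
rewrite /fmax; case: pickP => [m0 m0S|S0] mS Fb; last by rewrite S0 in mS.
by apply/bigmax_leP; split; [exact: Fb | exact: Fb].
Qed.

Lemma fmax_set1 F a : fmax [set a] F = F a.
Proof.
apply/le_anti; rewrite le_fmax ?set11 // andbT.
by apply: (fmax_le (m := a)) => [|k]; rewrite ?set11 // inE => /eqP ->.
Qed.

Lemma fmax_subset A B F a : a \in A -> A \subset B -> fmax A F <= fmax B F.
Proof. by move=> aA /subsetP sAB; apply: (fmax_le aA) => k /sAB; apply: le_fmax. Qed.

End Fmax.

Lemma fmax_int (R : archiRealDomainType) (I : finType) (S : {set I}) (F : I -> R) :
  {in S, forall k, F k \is a Num.int} -> fmax S F \is a Num.int.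
Proof.
rewrite /fmax; case: pickP => [m0 m0S|_] Fint; last exact: rpred0.
apply: (big_ind (fun x => x \is a Num.int)) => [|a b aZ bZ|k kS]; last exact: Fint.
  exact: Fint.
by rewrite /Num.max; case: ifP.
Qed.

Section ScenarioTree.
Variables (R : archiRealFieldType) (M : nat).
Variables (Node : finType) (root : Node) (par : Node -> Node) (dep : Node -> nat).
Hypothesis dep_root : dep root = 1%N.
Hypothesis dep_par : forall n, n != root -> dep n = (dep (par n)).+1.
Implicit Types (x g : Node -> 'I_M -> R).

Lemma dep_gt0 n : (0 < dep n)%N.
Proof. by case: (eqVneq n root) => [->|/dep_par ->]; rewrite ?dep_root. Qed.

Lemma dep1_root n : dep n = 1%N -> n = root.
Proof.
case: (eqVneq n root) => // /dep_par -> [] dep_par_n.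
by have := dep_gt0 (par n); rewrite dep_par_n.
Qed.

Lemma level1 : level dep 1 = [set root].
Proof. by apply/setP => k; rewrite !inE; apply/eqP/eqP => [/dep1_root|->]. Qed.

Lemma level1_sum (F : Node -> R) : \sum_(n | dep n == 1%N) F n = F root.
Proof. by apply: big_pred1 => n; apply/eqP/eqP => [/dep1_root|->]. Qed.

Lemma dep_ind (P : Node -> Prop) :
  (forall n, (forall m, (dep m < dep n)%N -> P m) -> P n) -> forall n, P n.
Proof.
move=> IH n; elim: {n}(dep n).+1 {-2}n (ltnSn (dep n)) => [|k IHk] n ltnk.
  by have := dep_gt0 n; lia.
by apply: IH => m ltmn; apply: IHk; lia.
Qed.

Lemma inPE k n : inP par dep k n = (k == n) || (n != root) && inP par dep k (par n).
Proof.
rewrite /inP; case: (eqVneq n root) => [->|nr] /=.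
  rewrite dep_root orbF; apply/andP/eqP => [[le_k1 /eqP <-]|->]; last first.
    by rewrite dep_root subnn.
  by have := dep_gt0 k => k_gt0; have -> : (1 - dep k = 0)%N by lia.
rewrite (dep_par nr); case: (eqVneq k n) => [->|kn] /=.
  by rewrite -(dep_par nr) leqnn subnn eqxx.
case: (ltngtP (dep k) (dep (par n)).+1) => [lt_k|gt_k|eq_k].
- by rewrite ltnS in lt_k; rewrite lt_k subSn // iterSr.
- by have -> : (dep k <= dep (par n))%N = false by lia.
- by rewrite eq_k subnn ltnn /= eq_sym (negbTE kn).
Qed.

Lemma inP_refl n : inP par dep n n.
Proof. by rewrite inPE eqxx. Qed.

Lemma Pset_root : Pset par dep root = [set root].
Proof. by apply/setP => k; rewrite !inE inPE eqxx orbF. Qed.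

Lemma Pset_par n : n != root -> Pset par dep (par n) \subset Pset par dep n.
Proof. by move=> nr; apply/subsetP => k; rewrite !inE => kPn; rewrite inPE nr kPn orbT. Qed.

Lemma par_children n : n != root -> n \in children root par (par n).
Proof. by move=> nr; rewrite inE nr eqxx. Qed.

Lemma cumE x n i :
  cum par dep x n i = x n i + (if n == root then 0 else cum par dep x (par n) i).
Proof.
rewrite /cum (bigD1 n) ?inP_refl //=; congr (_ + _).
case: (eqVneq n root) => [->|nr].
  by apply: big1 => k /andP[]; rewrite inPE eqxx orbF => /eqP ->; rewrite eqxx.
apply: eq_bigl => k; rewrite inPE nr /=.
case: (eqVneq k n) => [->|_] /=; last by rewrite andbT.
by rewrite /inP (dep_par nr) ltnn.
Qed.

Lemma cum_telescope x g :
  (forall i, x root i = g root i) ->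
  (forall n i, n != root -> x n i = g n i - g (par n) i) ->
  forall n i, cum par dep x n i = g n i.
Proof.
move=> x_root x_par; elim/dep_ind => n IH i; rewrite cumE.
case: (eqVneq n root) => [->|nr]; first by rewrite x_root addr0.
by rewrite IH ?(dep_par nr) // x_par // subrK.
Qed.

Lemma cum_nonanticipative x : nonanticipative dep x ->
  forall l m i, dep l = dep m -> cum par dep x l i = cum par dep x m i.
Proof.
move=> xna; elim/dep_ind => l IH m i dep_lm.
rewrite [LHS]cumE [RHS]cumE (xna l m dep_lm).
case: (eqVneq l root) => [lr|lr].
  by move: dep_lm; rewrite lr dep_root => /esym/dep1_root ->; rewrite eqxx.
case: (eqVneq m root) => [mr|mr].
  by have := dep_gt0 (par l); move: dep_lm; rewrite mr dep_root (dep_par lr) => -[->].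
congr (_ + _); apply: IH; first by rewrite (dep_par lr).
by move: dep_lm; rewrite (dep_par lr) (dep_par mr) => -[].
Qed.

Lemma cum_ancestor_le x : (forall n i, 0 <= x n i) ->
  forall n k i, inP par dep k n -> cum par dep x k i <= cum par dep x n i.
Proof.
move=> x_ge0; elim/dep_ind => n IH k i; rewrite inPE.
case: (eqVneq k n) => [->|_] //= /andP[nr kPn].
rewrite [leRHS]cumE (negbTE nr); apply: le_trans (IH _ _ _ _ kPn) _.
  by rewrite (dep_par nr).
by rewrite lerDr.
Qed.

End ScenarioTree.

Section Model.
Variables (R : archiRealFieldType) (T M N : nat).
Variables (Node : finType) (root : Node) (par : Node -> Node) (dep : Node -> nat).
Variables (p : Node -> R) (d : Node -> 'I_N -> R).
Variables (f : nat -> 'I_M -> R) (c : nat -> 'I_M -> 'I_N -> R) (h : nat -> 'I_M -> R).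
Variables (lam alpha : nat -> R).
Hypothesis dep_root : dep root = 1%N.
Hypothesis dep_par : forall n, n != root -> dep n = (dep (par n)).+1.
Hypothesis dep_le : forall n, (dep n <= T)%N.
Hypothesis p_ge0 : forall n, 0 <= p n.
Hypothesis f_ge0 : forall k i, (1 <= k <= T)%N -> 0 <= f k i.
Hypothesis lam01 : forall k, (2 <= k <= T)%N -> 0 <= lam k <= 1.

Local Notation objective := (objective T root par dep p f c lam alpha).
Local Notation opt_value := (opt_value T root par dep p f c lam alpha).

Lemma dep_range n : (1 <= dep n <= T)%N.
Proof. by rewrite (dep_gt0 dep_root dep_par) dep_le. Qed.

Lemma ftil_ge0 n i : 0 <= ftil root dep f lam n i.
Proof.
rewrite /ftil; case: (eqVneq n root) => [_|nr]; first exact: f_ge0 (dep_range n).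
have dep_n2 : (2 <= dep n <= T)%N.
  by have := dep_gt0 dep_root dep_par (par n); rewrite dep_le (dep_par nr) andbT.
have /andP[_ lam_le1] := lam01 dep_n2.
by rewrite mulr_ge0 ?subr_ge0 ?f_ge0 ?dep_range.
Qed.

Lemma lamtil_ge0 n : 0 <= lamtil T dep lam n.
Proof.
rewrite /lamtil /isleaf; case: eqP => [//|dep_nT].
suff /andP[] : 0 <= lam (dep n).+1 <= 1 by [].
by apply: lam01; have := dep_range n; rewrite ltnS; lia.
Qed.

Lemma objectiveB x x' y eta eta' u :
  objective x y eta u - objective x' y eta' u =
  \sum_n p n * (\sum_(i < M) ftil root dep f lam n i * (cum par dep x n i - cum par dep x' n i)
                + lamtil T dep lam n * (eta n - eta' n)).
Proof.
rewrite /objective -sumrB; apply: eq_bigr => n _.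
under [X in _ = p n * (X + _)]eq_bigr do rewrite mulrBr.
rewrite sumrB; ring.
Qed.

Lemma objective_le x x' y eta eta' u :
  (forall n i, cum par dep x' n i <= cum par dep x n i) ->
  (forall n, ~~ isleaf T dep n -> eta' n <= eta n) ->
  objective x' y eta' u <= objective x y eta u.
Proof.
move=> le_cum le_eta; rewrite -subr_ge0 objectiveB.
apply: sumr_ge0 => n _; rewrite mulr_ge0 ?addr_ge0 //.
  by apply: sumr_ge0 => i _; rewrite mulr_ge0 ?ftil_ge0 ?subr_ge0.
case: (boolP (isleaf T dep n)) => [leaf|nleaf]; first by rewrite /lamtil leaf mul0r.
by rewrite mulr_ge0 ?lamtil_ge0 ?subr_ge0 ?le_eta.
Qed.

Lemma opt_value_ge feas z a : opt_value feas z ->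
  (forall x y eta u, feas x y eta u -> a <= objective x y eta u) -> a <= z.
Proof.
move=> [_ z_inf] a_lb; apply/ler_addgt0Pr => e e_gt0.
have [x [y [eta [u [feas_xyeu lt_z]]]]] := z_inf e e_gt0.
exact: le_trans (a_lb _ _ _ _ feas_xyeu) (ltW lt_z).
Qed.

Lemma feas_TS_TSLP x y eta u :
  feas_TS root par dep d f c h x y eta u -> feas_TSLP root par dep d f c h x y eta u.
Proof. by case=> [[cons x_int] x_na]; split=> // n i; case: (x_int n i). Qed.

Lemma Bv_ge0 k (y : 'I_M -> 'I_N -> R) i :
  0 <= h k i -> (forall j, 0 <= y i j) -> 0 <= Bv h k y i.
Proof. by move=> h_ge0 y_ge0; rewrite mulr_ge0 ?invr_ge0 ?sumr_ge0. Qed.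

Section Heuristic.
Variables (yL : Node -> 'I_M -> 'I_N -> R) (uL : Node -> R).
Local Notation B n := (Bv h (dep n) (yL n)).
Local Notation MC := (MC par dep h yL).
Local Notation MT := (MT par dep h yL).
Local Notation xMS := (xMS root par dep h yL).
Local Notation xTS := (xTS root par dep h yL).
Local Notation etaMS := (etaMS root par dep f c h yL uL).
Local Notation etaTS := (etaTS root par dep f c h yL uL).

Lemma MC_root i : MC root i = ceilR (B root i).
Proof. by rewrite /Defs.MC (Pset_root dep_root dep_par) fmax_set1. Qed.

Lemma MT_root i : MT root i = B root i.
Proof.
rewrite /Defs.MT (Pset_root dep_root dep_par) fmax_set1 dep_root.
by rewrite (level1 dep_root dep_par) fmax_set1 dep_root.
Qed.

Lemma cum_xMS n i : cum par dep xMS n i = MC n i.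
Proof.
apply: (cum_telescope dep_root dep_par) => [{}i|{}n {}i nr].
  by rewrite /Defs.xMS eqxx MC_root.
by rewrite /Defs.xMS (negbTE nr).
Qed.

Lemma cum_xTS n i : cum par dep xTS n i = MT n i.
Proof.
apply: (cum_telescope dep_root dep_par) => [{}i|{}n {}i nr].
  by rewrite /Defs.xTS eqxx MT_root.
by rewrite /Defs.xTS (negbTE nr).
Qed.

Lemma ceil_le_MC n i : ceilR (B n i) <= MC n i.
Proof.
by apply: (le_fmax (fun m => ceilR (B m i))); rewrite inE (inP_refl dep_root dep_par).
Qed.

Lemma MC_par_le n i : n != root -> MC (par n) i <= MC n i.
Proof.
move=> nr; apply: (fmax_subset _ (a := par n)); last exact: (Pset_par dep_root dep_par nr).
by rewrite inE (inP_refl dep_root dep_par).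
Qed.

Lemma MC_int n i : MC n i \is a Num.int.
Proof. by apply: fmax_int => m _; apply: intr_int. Qed.

Lemma MT_le_cum x : nonanticipative dep x -> (forall n i, 0 <= x n i) ->
  (forall n i, B n i <= cum par dep x n i) -> forall n i, MT n i <= cum par dep x n i.
Proof.
move=> x_na x_ge0 B_le n i; apply: (fmax_le (m := n)).
  by rewrite inE (inP_refl dep_root dep_par).
move=> m; rewrite inE => mPn; apply: (fmax_le (m := m)); first by rewrite inE.
move=> l; rewrite inE => /eqP dep_lm; apply: le_trans (B_le l i) _.
rewrite (cum_nonanticipative dep_root dep_par x_na _ dep_lm).
exact: (cum_ancestor_le dep_root dep_par x_ge0).
Qed.

Lemma xMS_feasible :
  (forall n i j, 0 <= yL n i j) -> (forall n, n != root -> 0 <= uL n) ->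
  (forall n j, Av (yL n) j = d n j) -> (forall i, 0 <= h (dep root) i) ->
  feas_MS root par dep d f c h xMS yL etaMS uL.
Proof.
move=> y_ge0 u_ge0 Ay h_ge0; split; first split => //.
- by move=> n i; rewrite cum_xMS; apply: le_trans (ceil_le_MC n i); apply: ceil_ge.
- move=> n nr; rewrite /Defs.etaMS.
  have := le_fmax (fun m => fdot f (dep m) (cum par dep xMS m) + cdot c (dep m) (yL m) - uL m)
            (par_children par nr).
  lra.
- move=> n i; rewrite /Defs.xMS; case: eqP => [_|/eqP nr].
    by split; [exact: intr_int | apply: le_trans (ceil_ge _); exact: Bv_ge0].
  by rewrite rpredB ?MC_int // subr_ge0 MC_par_le.
Qed.

Lemma etaTS_le x eta n m : m \in children root par n ->
  (forall l, l != root ->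
     fdot f (dep l) (cum par dep x l) + cdot c (dep l) (yL l) <= uL l + eta (par l)) ->
  (forall l i, MT l i <= cum par dep x l i) ->
  etaTS n <= eta n.
Proof.
move=> m_child eta_ge MT_le; apply: (fmax_le m_child) => l; rewrite inE => /andP[lr /eqP <-].
suff : fdot f (dep l) (cum par dep xTS l) <= fdot f (dep l) (cum par dep x l).
  by have := eta_ge l lr; lra.
by apply: ler_sum => i _; rewrite ler_wpM2l ?f_ge0 ?dep_range ?cum_xTS.
Qed.

Lemma VMS_LB1E : p root = 1 ->
  VMS_LB1 T root par dep p f c h lam yL uL =
  objective xTS yL etaTS uL - objective xMS yL etaMS uL.
Proof.
move=> p_root; rewrite objectiveB; under eq_bigr do rewrite mulrDr.
rewrite big_split /= (bigD1 root) //=.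
rewrite [X in _ = _ + X](bigID (fun n => ~~ isleaf T dep n)) /=.
rewrite [X in _ = _ + (_ + X)]big1 ?addr0 => [|n]; last first.
  by rewrite negbK /lamtil => ->; rewrite mul0r mulr0.
rewrite /VMS_LB1; congr (_ + _ + _).
- rewrite p_root mul1r /ftil eqxx; apply: eq_bigr => i _.
  by rewrite cum_xTS cum_xMS MT_root MC_root.
- apply: eq_bigr => n nr; rewrite /ftil (negbTE nr) -mulrA /fdot mulr_sumr.
  by congr (_ * _); apply: eq_bigr => i _; rewrite cum_xTS cum_xMS mulrA.
- by apply: eq_bigr => n nleaf; rewrite /lamtil (negbTE nleaf) mulrA.
Qed.

End Heuristic.

End Model.

Theorem corollary1 (R : archiRealFieldType) (T M N : nat)
  (hT : (2 <= T)%N) (hM : (1 <= M)%N) (hN : (1 <= N)%N)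
  (Node : finType) (root : Node) (par : Node -> Node) (dep : Node -> nat)
  (p : Node -> R) (d : Node -> 'I_N -> R)
  (f : nat -> 'I_M -> R) (c : nat -> 'I_M -> 'I_N -> R) (h : nat -> 'I_M -> R)
  (lam alpha : nat -> R)
  (htree : scenario_tree T root par dep p)
  (hf : forall k i, (1 <= k <= T)%N -> 0 <= f k i)
  (hc : forall k i j, (1 <= k <= T)%N -> 0 <= c k i j)
  (hh : forall k i, (1 <= k <= T)%N -> 0 < h k i)
  (hd : forall n j, 0 <= d n j)
  (hlam : forall k, (2 <= k <= T)%N -> 0 <= lam k <= 1)
  (halpha : forall k, (2 <= k <= T)%N -> 0 < alpha k < 1)
  (zMS zTS : R)
  (hzMS : opt_value T root par dep p f c lam alpha
            (feas_MS root par dep d f c h) zMS)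
  (hzTS : opt_value T root par dep p f c lam alpha
            (feas_TS root par dep d f c h) zTS)
  (xL : Node -> 'I_M -> R) (yL : Node -> 'I_M -> 'I_N -> R) (etaL uL : Node -> R)
  (hLPfeas : feas_TSLP root par dep d f c h xL yL etaL uL)
  (hLPopt : forall x y eta u, feas_TSLP root par dep d f c h x y eta u ->
     objective T root par dep p f c lam alpha xL yL etaL uL
       <= objective T root par dep p f c lam alpha x y eta u) :
  zTS - zMS >= VMS_LB1 T root par dep p f c h lam yL uL.
Proof.
have [dep_root [dep_par [dep_le [has_child [p_gt0 [level_sum _]]]]]] := htree.
have [[y_ge0 u_ge0 Ay B_le eta_ge] xL_ge0 xL_na] := hLPfeas.
have p_ge0 n : 0 <= p n by exact: ltW.
have p_root : p root = 1.
  by rewrite -(level1_sum dep_root dep_par p) level_sum // (ltnW hT).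
have MT_le := MT_le_cum dep_root dep_par xL_na xL_ge0 B_le.
have zMS_le := hzMS.1 _ _ _ _ (xMS_feasible f c dep_root dep_par y_ge0 u_ge0 Ay
                                 (fun i => ltW (hh _ i (dep_range dep_root dep_par dep_le root)))).
have LP_le_zTS : objective T root par dep p f c lam alpha xL yL etaL uL <= zTS.
  by apply: (opt_value_ge hzTS) => x y eta u /feas_TS_TSLP; apply: hLPopt.
have TS_le_LP : objective T root par dep p f c lam alpha (xTS root par dep h yL) yL
                  (etaTS root par dep f c h yL uL) uL
                <= objective T root par dep p f c lam alpha xL yL etaL uL.
  apply: (objective_le _ _ dep_root dep_par dep_le p_ge0 hf hlam) => [n i|n nleaf].
    by rewrite (cum_xTS h dep_root dep_par).
  have [m [mr par_m]] : exists m, m != root /\ par m = n.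
    by apply: has_child; rewrite ltn_neqAle dep_le andbT.
  have m_child : m \in children root par n by rewrite inE mr par_m eqxx.
  exact: (etaTS_le dep_root dep_par dep_le hf m_child eta_ge MT_le).
rewrite (VMS_LB1E T f c h lam alpha dep_root dep_par yL uL p_root).
exact: lerB (le_trans TS_le_LP LP_le_zTS) zMS_le.
Qed.
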